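(* Let $R$ be a commutative ring and let $x\in R[[t]]$ admit a strict Weierstrass factorization. Then for every ring homomorphism $R\to R'$, the canonical map $$(R[[t]]/(x))\otimes_R R'\to R'[[t]]/(x)$$ is an isomorphism, where on the right $x$ denotes the image of $x$ in $R'[[t]]$.
   Context: A strict Weierstrass factorization of $x\in R[[t]]$ is an expression $x=uq$ with $u\in R[[t]]^\times$ and $q\in R[t]$ a monic polynomial such that $t^n\in qR[[t]]$ for some $n\in\mathbb{N}$. $(x)$ denotes the ideal generated by $x$. *)

(* Formal power series R[[t]] are represented by their
   coefficient sequences  nat -> R ; ring operations are defined explicitly. *)
From HB Require Import structures.
From mathcomp Require Import all_boot all_order all_algebra.
Set Implicit Arguments. Unset Strict Implicit. Unset Printing Implicit Defensive.
Import GRing.Theory.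
Local Open Scope ring_scope.

Definition ps_mul (R : pzSemiRingType) (f g : nat -> R) : nat -> R :=
  fun n => \sum_(i < n.+1) f i * g (n - i)%N.

Definition ps_one (R : pzSemiRingType) : nat -> R :=
  fun n => if n == 0%N then 1 else 0.
Definition ps_tpow (R : pzSemiRingType) (k : nat) : nat -> R :=
  fun n => if n == k then 1 else 0.

Definition ps_unit (R : pzSemiRingType) (u : nat -> R) : Prop :=
  exists v : nat -> R, forall n, ps_mul u v n = ps_one R n.

Definition ps_monic_poly (R : pzSemiRingType) (q : nat -> R) : Prop :=
  exists d : nat, q d = 1 /\ forall n, (d < n)%N -> q n = 0.

Definition ps_in_ideal (R : pzSemiRingType) (x f : nat -> R) : Prop :=
  exists g : nat -> R, forall n, f n = ps_mul x g n.

Definition ps_cong (R : pzRingType) (x f f' : nat -> R) : Prop :=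
  ps_in_ideal x (fun n => f n - f' n).

Definition strict_weierstrass (R : pzSemiRingType) (x : nat -> R) : Prop :=
  exists (u q : nat -> R),
    [/\ ps_unit u, ps_monic_poly q, (forall n, x n = ps_mul u q n) &
        exists k : nat, ps_in_ideal q (ps_tpow R k)].

(* The tensor product is characterized by its universal property: the map is an
   isomorphism iff the R-bilinear map
      R[[t]]/(x) * R' -> R'[[t]]/(phi x),  ([a], r) |-> [r * phi(a)]
   is universal among R-bilinear maps into R-modules M
   (R' and R'[[t]]/(phi x) being R-modules via phi). *)
Definition base_change_iso (R R' : comPzRingType) (phi : {rmorphism R -> R'})
    (x : nat -> R) : Prop :=
  let can (a : nat -> R) (r : R') : nat -> R' := fun n => r * phi (a n) in
  let xphi : nat -> R' := fun n => phi (x n) in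
  forall (M : lmodType R) (B : (nat -> R) -> R' -> M),
    (forall a a' r, B (fun n => a n + a' n) r = B a r + B a' r) ->
    (forall a r r', B a (r + r') = B a r + B a r') ->
    (forall c a r, B (fun n => c * a n) r = c *: B a r) ->
    (forall c a r, B a (phi c * r) = c *: B a r) ->
    (forall a a' r, ps_cong x a a' -> B a r = B a' r) ->
    let good (h : (nat -> R') -> M) :=
      [/\ forall f f', h (fun n => f n + f' n) = h f + h f',
          forall c f, h (fun n => phi c * f n) = c *: h f,
          forall f f', ps_cong xphi f f' -> h f = h f' &
          forall a r, h (can a r) = B a r] in
    (exists h, good h) /\
    (forall h1 h2, good h1 -> good h2 -> forall f, h1 f = h2 f).

From mathcomp Require Import all_boot all_order all_algebra.
From Stdlib Require Import FunctionalExtensionality.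
Set Implicit Arguments. Unset Strict Implicit. Unset Printing Implicit Defensive.
Import GRing.Theory.
Local Open Scope ring_scope.

(* Since the unit u is invertible and q divides t^k, x itself divides t^k, say
   x w = t^k.  Then every series vanishing below degree k lies in (x), so modulo
   (x) a series is congruent to its truncation below degree k, over R and, after
   applying phi, over R'.  Hence R'[[t]]/(x) is spanned over R by the classes of
   r t^i with i < k, and a bilinear B can only factor through
   f |-> sum_(i < k) B(t^i, f_i).  This map does factor B, and it kills the
   multiples x g because below degree k they agree with
   sum_(m < k) g_m phi(x t^m), where each x t^m lies in (x). *)

Section SemiRingSeries.
Variable R : pzSemiRingType.
Implicit Types f g h : nat -> R.

Lemma sum_mul_tpow (F : nat -> R) K n :
  \sum_(i < K) F i * ps_tpow R i n = if (n < K)%N then F n else 0.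
Proof.
rewrite (eq_bigr (fun i : 'I_K => if i == n :> nat then F i else 0)).
  by rewrite -big_mkcond (big_ord1_eq _ F n K).
by move=> i _; rewrite /ps_tpow eq_sym; case: eqP; rewrite ?mulr1 ?mulr0.
Qed.

Lemma ps_mul_tpowl k g n :
  ps_mul (ps_tpow R k) g n = if (k <= n)%N then g (n - k)%N else 0.
Proof.
rewrite /ps_mul (eq_bigr (fun i : 'I_n.+1 => if i == k :> nat then g (n - i)%N else 0)).
  by rewrite -big_mkcond (big_ord1_eq _ (fun i => g (n - i)%N) k n.+1) ltnS.
by move=> i _; rewrite /ps_tpow; case: eqP; rewrite ?mul1r ?mul0r.
Qed.

Lemma ps_mul1l f : ps_mul (ps_one R) f = f.
Proof. by apply: functional_extensionality => n; rewrite (ps_mul_tpowl 0) subn0. Qed.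

Lemma ps_mul_rev f g n : ps_mul f g n = \sum_(i < n.+1) f (n - i)%N * g i.
Proof.
rewrite /ps_mul (reindex_inj rev_ord_inj); apply: eq_bigr => i _ /=.
by rewrite subSS subKn // -ltnS.
Qed.

Lemma ps_mulA f g h : ps_mul f (ps_mul g h) = ps_mul (ps_mul f g) h.
Proof.
apply: functional_extensionality => n; rewrite [RHS]ps_mul_rev {1}/ps_mul.
pose coef3 i j := f i * (g (n - i - j)%N * h j).
transitivity (\sum_(i < n.+1) \sum_(j < n.+1 | (j <= n - i)%N) coef3 i j).
  apply: eq_bigr => i _; rewrite ps_mul_rev big_distrr /=.
  by rewrite (big_ord_narrow_leq (leq_subr _ _)).
rewrite (exchange_big_dep predT) //=; apply: eq_bigr => j _.
transitivity (\sum_(i < n.+1 | (i <= n - j)%N) coef3 i j).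
  apply: eq_bigl => i; rewrite -ltnS -(ltnS i) -!subSn ?leq_ord //.
  by rewrite -subn_gt0 -(subn_gt0 i) -!subnDA addnC.
rewrite (big_ord_narrow_leq (leq_subr _ _)) big_distrl /=.
by apply: eq_bigr => i _; rewrite /coef3 -!subnDA addnC mulrA.
Qed.

Lemma ps_in_ideal_vanishing x w k f :
  ps_mul x w = ps_tpow R k -> (forall n, (n < k)%N -> f n = 0) ->
  ps_in_ideal x f.
Proof.
move=> xw_tpow f_low; exists (ps_mul w (fun n => f (n + k)%N)) => n.
rewrite ps_mulA xw_tpow ps_mul_tpowl.
by case: leqP => [/subnK -> | /f_low].
Qed.

End SemiRingSeries.

Section RingSeries.
Variable R : pzRingType.

Lemma ps_cong_trunc x w k f :
  ps_mul x w = ps_tpow R k ->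
  ps_cong x f (fun n => \sum_(i < k) f i * ps_tpow R i n).
Proof.
move=> xw_tpow; apply: (ps_in_ideal_vanishing xw_tpow) => n n_lt_k.
by rewrite sum_mul_tpow n_lt_k subrr.
Qed.

End RingSeries.

Section ComRingSeries.
Variable R : comPzRingType.
Implicit Types f g h : nat -> R.

Lemma ps_mulC f g : ps_mul f g = ps_mul g f.
Proof.
apply: functional_extensionality => n; rewrite ps_mul_rev.
by apply: eq_bigr => i _; rewrite mulrC.
Qed.

Lemma ps_mulCA f g h : ps_mul f (ps_mul g h) = ps_mul g (ps_mul f h).
Proof. by rewrite ps_mulA (ps_mulC f) -ps_mulA. Qed.

Lemma ps_mul_coef_expand f g K n : (n < K)%N ->
  ps_mul f g n = \sum_(m < K) g m * ps_mul f (ps_tpow R m) n.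
Proof.
move=> n_lt_K; rewrite ps_mulC {1}/ps_mul.
rewrite (big_ord_widen _ (fun m => g m * f (n - m)%N) n_lt_K) big_mkcond.
apply: eq_bigr => m _; rewrite ps_mulC ps_mul_tpowl ltnS.
by case: leqP; rewrite ?mulr0.
Qed.

Lemma strict_weierstrass_dvd_tpow x :
  strict_weierstrass x -> exists w k, ps_mul x w = ps_tpow R k.
Proof.
move=> [u [q [[v uv1] _ x_uq [k [g qg_tpow]]]]].
exists (ps_mul v g), k.
have -> : x = ps_mul u q := functional_extensionality _ _ x_uq.
have -> : ps_tpow R k = ps_mul q g := functional_extensionality _ _ qg_tpow.
have uv_one : ps_mul u v = ps_one R := functional_extensionality _ _ uv1.
by rewrite -ps_mulA (ps_mulCA q) ps_mulA uv_one ps_mul1l.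
Qed.

End ComRingSeries.

Section SeriesMap.
Variables (R S : pzSemiRingType) (phi : {rmorphism R -> S}).

Lemma map_ps_mul f g n :
  phi (ps_mul f g n) = ps_mul (fun m => phi (f m)) (fun m => phi (g m)) n.
Proof. by rewrite rmorph_sum; apply: eq_bigr => i _; rewrite rmorphM. Qed.

Lemma map_ps_tpow k n : phi (ps_tpow R k n) = ps_tpow S k n.
Proof. by rewrite /ps_tpow; case: eqP; rewrite ?rmorph1 ?rmorph0. Qed.

End SeriesMap.

Section PointwiseAdditive.
Variables (S : nmodType) (V : zmodType) (h : (nat -> S) -> V).
Hypothesis hD : forall f f', h (fun n => f n + f' n) = h f + h f'.

Lemma pointwise_additive0 : h (fun _ => 0) = 0.
Proof.
apply: (addrI (h (fun _ => 0))); rewrite addr0 -hD.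
by congr h; apply: functional_extensionality => n; rewrite addr0.
Qed.

Lemma pointwise_additive_sum K (F : nat -> nat -> S) :
  h (fun n => \sum_(m < K) F m n) = \sum_(m < K) h (F m).
Proof.
elim: K => [|K IH].
  rewrite big_ord0 -pointwise_additive0; congr h.
  by apply: functional_extensionality => n; rewrite big_ord0.
rewrite big_ord_recr /= -IH -hD; congr h.
by apply: functional_extensionality => n; rewrite big_ord_recr.
Qed.

End PointwiseAdditive.

Section BaseChange.
Variables (R R' : comPzRingType) (phi : {rmorphism R -> R'}).
Variables (x w : nat -> R) (k : nat).
Hypothesis xw_tpow : ps_mul x w = ps_tpow R k.

Local Notation xphi := (fun n => phi (x n)).

Lemma map_xw_tpow : ps_mul xphi (fun n => phi (w n)) = ps_tpow R' k.
Proof.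
apply: functional_extensionality => n.
by rewrite -map_ps_mul xw_tpow map_ps_tpow.
Qed.

Variables (M : lmodType R) (B : (nat -> R) -> R' -> M).
Hypothesis BDl : forall a a' r, B (fun n => a n + a' n) r = B a r + B a' r.
Hypothesis BDr : forall a r r', B a (r + r') = B a r + B a r'.
Hypothesis BZl : forall c a r, B (fun n => c * a n) r = c *: B a r.
Hypothesis BZr : forall c a r, B a (phi c * r) = c *: B a r.
Hypothesis B_cong : forall a a' r, ps_cong x a a' -> B a r = B a' r.

Definition is_factorization (h : (nat -> R') -> M) : Prop :=
  [/\ forall f f', h (fun n => f n + f' n) = h f + h f',
      forall c f, h (fun n => phi c * f n) = c *: h f,
      forall f f', ps_cong xphi f f' -> h f = h f' &
      forall a r, h (fun n => r * phi (a n)) = B a r].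

Lemma B_ideal a r : ps_in_ideal x a -> B a r = 0.
Proof.
move=> [g ag]; rewrite (B_cong (a' := fun _ => 0)).
  exact: (@pointwise_additive0 _ _ (B^~ r) (fun a a' => BDl a a' r)).
by exists g => n; rewrite subr0 ag.
Qed.

Definition factor_map (f : nat -> R') : M := \sum_(i < k) B (ps_tpow R i) (f i).

Lemma factor_mapD f f' :
  factor_map (fun n => f n + f' n) = factor_map f + factor_map f'.
Proof. by rewrite -big_split; apply: eq_bigr => i _; rewrite BDr. Qed.

Lemma factor_mapZ c f : factor_map (fun n => phi c * f n) = c *: factor_map f.
Proof. by rewrite scaler_sumr; apply: eq_bigr => i _; rewrite BZr. Qed.

Lemma eq_factor_map f f' :
  (forall i, (i < k)%N -> f i = f' i) -> factor_map f = factor_map f'.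
Proof. by move=> eq_low; apply: eq_bigr => i _; rewrite eq_low. Qed.

Lemma factor_map_can a r : factor_map (fun n => r * phi (a n)) = B a r.
Proof.
rewrite /factor_map; under eq_bigr do rewrite mulrC BZr -BZl.
have B_suml := @pointwise_additive_sum _ _ (B^~ r) (fun a a' => BDl a a' r) k.
rewrite -(B_suml (fun i n => a i * ps_tpow R i n)) /=.
by rewrite (B_cong r (ps_cong_trunc a xw_tpow)).
Qed.

Lemma factor_map_ideal g : factor_map (ps_mul xphi g) = 0.
Proof.
pose F m n := g m * phi (ps_mul x (ps_tpow R m) n).
rewrite (@eq_factor_map _ (fun n => \sum_(m < k) F m n)) => [|i i_lt_k].
  rewrite (pointwise_additive_sum factor_mapD) big1 // => m _.
  by rewrite factor_map_can B_ideal //; exists (ps_tpow R m).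
rewrite (ps_mul_coef_expand _ _ i_lt_k); apply: eq_bigr => m _.
rewrite /F map_ps_mul; congr (_ * ps_mul _ _ _).
by apply: functional_extensionality => n; rewrite map_ps_tpow.
Qed.

Lemma factor_map_cong f f' : ps_cong xphi f f' -> factor_map f = factor_map f'.
Proof.
move=> [g fg]; have -> : f = fun n => f' n + ps_mul xphi g n.
  by apply: functional_extensionality => n; rewrite -fg addrC subrK.
by rewrite factor_mapD factor_map_ideal addr0.
Qed.

Lemma factor_map_is_factorization : is_factorization factor_map.
Proof.
split; [exact: factor_mapD | exact: factor_mapZ | exact: factor_map_cong |].
exact: factor_map_can.
Qed.

Lemma factorization_eq_factor_map h :
  is_factorization h -> forall f, h f = factor_map f.
Proof.
move=> [hD _ h_cong h_can] f.
rewrite (h_cong f (fun n => \sum_(i < k) f i * phi (ps_tpow R i n))).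
  rewrite (pointwise_additive_sum hD k (fun i n => f i * phi (ps_tpow R i n))).
  by apply: eq_bigr => i _; rewrite h_can.
have -> : (fun n => \sum_(i < k) f i * phi (ps_tpow R i n)) =
          (fun n => \sum_(i < k) f i * ps_tpow R' i n).
  by apply: functional_extensionality => n; under eq_bigr do rewrite map_ps_tpow.
exact: ps_cong_trunc map_xw_tpow.
Qed.

End BaseChange.

Theorem corollary3p4 (R : comPzRingType) (x : nat -> R) :
  strict_weierstrass x ->
  forall (R' : comPzRingType) (phi : {rmorphism R -> R'}),
    base_change_iso phi x.
Proof.
move=> /strict_weierstrass_dvd_tpow[w [k xw_tpow]] R' phi.
move=> M B BDl BDr BZl BZr B_cong good; split.
  exists (factor_map k B).
  exact: (factor_map_is_factorization xw_tpow BDl BDr BZl BZr B_cong).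
move=> h1 h2 h1_fact h2_fact f.
by rewrite (factorization_eq_factor_map xw_tpow h1_fact)
           (factorization_eq_factor_map xw_tpow h2_fact).
Qed.
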